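(* Let $X$ be a sup-lattice. Then $X$ is an imprimitivity bimodule between some Morita equivalent m-regular involutive quantales $A$ and $B$ if and only if there exists a surjective sup-preserving map $p: X\otimes X^*\otimes X\to X$ such that for all $x_1,\dots,x_5\in X$: a) $p(p(x_1\otimes x_2^*\otimes x_3)\otimes x_4^*\otimes x_5)=p(x_1\otimes p(x_4\otimes x_3^*\otimes x_2)^*\otimes x_5)=p(x_1\otimes x_2^*\otimes p(x_3\otimes x_4^*\otimes x_5))$; b) if $p(u\otimes v^*\otimes x_1)=p(u\otimes v^*\otimes x_2)$ for all $u,v\in X$, then $x_1=x_2$; c) if $p(x_1\otimes v^*\otimes u)=p(x_2\otimes v^*\otimes u)$ for all $u,v\in X$, then $x_1=x_2$.
   Context: A sup-lattice is a complete lattice; sup-preserving maps preserve arbitrary joins; $\otimes$ is the sup-lattice tensor product. For a sup-lattice $X$, its conjugate $X^*$ is the same sup-lattice, and $x\mapsto x^*$ denotes the identity map $X\to X^*$. A quantale is a sup-lattice with an associative multiplication distributing over arbitrary joins on both sides; an involutive quantale additionally has a map $a\mapsto a^*$ with $a^{**}=a$, $(\bigvee a_i)^*=\bigvee a_i^*$, $(ab)^*=b^*a^*$. Modules over a quantale $A$ are sup-lattices with an associative action preserving arbitrary joins in each variable; a right module $M$ is essential if every element is a join of elements $m\cdot a$, separated if ($m\cdot a=n\cdot a$ for all $a$) implies $m=n$, m-regular if both; dually for left modules; an m-regular $A,B$-bimodule is an m-regular left $A$-module and m-regular right $B$-module with commuting actions; a quantale is m-regular if it is m-regular as a bimodule over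 itself. For involutive quantales $A,B$, an imprimitivity $A,B$-bimodule is a sup-lattice $X$ which is an m-regular $A,B$-bimodule equipped with inner products ${}_A\langle-,-\rangle:X\times X\to A$ and $\langle-,-\rangle_B:X\times X\to B$, each preserving arbitrary joins in each variable, such that ${}_A\langle a\cdot x,y\rangle=a\cdot{}_A\langle x,y\rangle$, ${}_A\langle x,y\rangle^*={}_A\langle y,x\rangle$, $\langle x,y\cdot b\rangle_B=\langle x,y\rangle_B\cdot b$, $\langle x,y\rangle_B^*=\langle y,x\rangle_B$, both inner products are full (every element of $A$, resp. $B$, is a join of inner products), and ${}_A\langle x,y\rangle\cdot z=x\cdot\langle y,z\rangle_B$ for all $x,y,z\in X$, $a\in A$, $b\in B$. *)

Set Implicit Arguments.
Unset Strict Implicit.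

Record supLattice := SupLattice {
  car :> Type;
  le : car -> car -> Prop;
  le_refl : forall x, le x x;
  le_trans : forall x y z, le x y -> le y z -> le x z;
  le_antisym : forall x y, le x y -> le y x -> x = y;
  sup : (car -> Prop) -> car;
  sup_ub : forall (S : car -> Prop) x, S x -> le x (sup S);
  sup_least : forall (S : car -> Prop) y, (forall x, S x -> le x y) -> le (sup S) y
}.

Definition image {T U : Type} (f : T -> U) (S : T -> Prop) : U -> Prop :=
  fun u => exists t, S t /\ u = f t.

Definition join_of {X : supLattice} (G : X -> Prop) (x : X) : Prop :=
  exists F : X -> Prop, (forall y, F y -> G y) /\ x = sup F.

Record quantale := Quantale {
  qlat :> supLattice;
  qmul : qlat -> qlat -> qlat;
  qmul_assoc : forall a b c, qmul (qmul a b) c = qmul a (qmul b c);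
  qmul_supr : forall a (S : qlat -> Prop), qmul a (sup S) = sup (image (qmul a) S);
  qmul_supl : forall a (S : qlat -> Prop),
      qmul (sup S) a = sup (image (fun b => qmul b a) S)
}.

Record invQuantale := InvQuantale {
  iquant :> quantale;
  qinv : iquant -> iquant;
  qinv_inv : forall a, qinv (qinv a) = a;
  qinv_sup : forall (S : iquant -> Prop), qinv (sup S) = sup (image qinv S);
  qinv_mul : forall a b, qinv (qmul a b) = qmul (qinv b) (qinv a)
}.

Definition is_left_module (A : quantale) (X : supLattice) (act : A -> X -> X) : Prop :=
  (forall a b x, act (qmul a b) x = act a (act b x)) /\
  (forall (S : A -> Prop) x, act (sup S) x = sup (image (fun a => act a x) S)) /\
  (forall a (S : X -> Prop), act a (sup S) = sup (image (act a) S)).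

Definition is_right_module (B : quantale) (X : supLattice) (act : X -> B -> X) : Prop :=
  (forall x a b, act x (qmul a b) = act (act x a) b) /\
  (forall (S : X -> Prop) b, act (sup S) b = sup (image (fun x => act x b) S)) /\
  (forall x (S : B -> Prop), act x (sup S) = sup (image (act x) S)).

Definition left_essential (A : quantale) (X : supLattice) (act : A -> X -> X) : Prop :=
  forall x : X, join_of (fun y => exists a m, y = act a m) x.

Definition left_separated (A : quantale) (X : supLattice) (act : A -> X -> X) : Prop :=
  forall x y : X, (forall a, act a x = act a y) -> x = y.

Definition right_essential (B : quantale) (X : supLattice) (act : X -> B -> X) : Prop :=
  forall x : X, join_of (fun y => exists m b, y = act m b) x.

Definition right_separated (B : quantale) (X : supLattice) (act : X -> B -> X) : Prop :=
  forall x y : X, (forall b, act x b = act y b) -> x = y.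

Definition m_regular_left (A : quantale) (X : supLattice) (act : A -> X -> X) : Prop :=
  is_left_module act /\ left_essential act /\ left_separated act.

Definition m_regular_right (B : quantale) (X : supLattice) (act : X -> B -> X) : Prop :=
  is_right_module act /\ right_essential act /\ right_separated act.

Definition m_regular_bimodule (A B : quantale) (X : supLattice)
    (lact : A -> X -> X) (ract : X -> B -> X) : Prop :=
  m_regular_left lact /\ m_regular_right ract /\
  (forall a x b, ract (lact a x) b = lact a (ract x b)).

Definition m_regular_quantale (A : quantale) : Prop :=
  @m_regular_bimodule A A A (@qmul A) (@qmul A).

Definition is_imprimitivity (A B : invQuantale) (X : supLattice)
    (lact : A -> X -> X) (ract : X -> B -> X)
    (lip : X -> X -> A) (rip : X -> X -> B) : Prop :=
  m_regular_bimodule lact ract /\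
  (forall (S : X -> Prop) y, lip (sup S) y = sup (image (fun x => lip x y) S)) /\
  (forall x (S : X -> Prop), lip x (sup S) = sup (image (lip x) S)) /\
  (forall (S : X -> Prop) y, rip (sup S) y = sup (image (fun x => rip x y) S)) /\
  (forall x (S : X -> Prop), rip x (sup S) = sup (image (rip x) S)) /\
  (forall a x y, lip (lact a x) y = qmul a (lip x y)) /\
  (forall x y, qinv (lip x y) = lip y x) /\
  (forall x y b, rip x (ract y b) = qmul (rip x y) b) /\
  (forall x y, qinv (rip x y) = rip y x) /\
  (forall a : A, join_of (fun c => exists x y, c = lip x y) a) /\
  (forall b : B, join_of (fun c => exists x y, c = rip x y) b) /\
  (forall x y z, lact (lip x y) z = ract x (rip y z)).

(** * The threefold tensor product X (x) Y (x) Z of sup-lattices,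
    realized (Joyal--Tierney) as the sup-lattice of subsets of X*Y*Z that are
    down-closed and closed under joins in each variable separately. *)
Section Tensor.
Variables X Y Z : supLattice.

Definition tclosed (S : X -> Y -> Z -> Prop) : Prop :=
  (forall x y z x' y' z', S x y z -> le x' x -> le y' y -> le z' z -> S x' y' z') /\
  (forall (F : X -> Prop) y z, (forall x, F x -> S x y z) -> S (sup F) y z) /\
  (forall x (F : Y -> Prop) z, (forall y, F y -> S x y z) -> S x (sup F) z) /\
  (forall x y (F : Z -> Prop), (forall z, F z -> S x y z) -> S x y (sup F)).

Definition tcl (R : X -> Y -> Z -> Prop) : X -> Y -> Z -> Prop :=
  fun x y z => forall T, tclosed T -> (forall a b c, R a b c -> T a b c) -> T x y z.

Lemma tcl_closed R : tclosed (tcl R).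
Proof.
  split; [|split; [|split]].
  - intros x y z x' y' z' H h1 h2 h3 T HT HR.
    exact (proj1 HT _ _ _ _ _ _ (H T HT HR) h1 h2 h3).
  - intros F y z H T HT HR. destruct HT as [Hd [Hx [Hy Hz]]].
    apply Hx; intros x Fx; apply (H x Fx T (conj Hd (conj Hx (conj Hy Hz))) HR).
  - intros x F z H T HT HR. destruct HT as [Hd [Hx [Hy Hz]]].
    apply Hy; intros y Fy; apply (H y Fy T (conj Hd (conj Hx (conj Hy Hz))) HR).
  - intros x y F H T HT HR. destruct HT as [Hd [Hx [Hy Hz]]].
    apply Hz; intros z Fz; apply (H z Fz T (conj Hd (conj Hx (conj Hy Hz))) HR).
Qed.

Definition tensor3 : Type := { S : X -> Y -> Z -> Prop | tclosed S }.

Definition ttensor (x : X) (y : Y) (z : Z) : tensor3 :=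
  exist _ (tcl (fun a b c => a = x /\ b = y /\ c = z)) (tcl_closed _).

Definition tsup (F : tensor3 -> Prop) : tensor3 :=
  exist _ (tcl (fun a b c => exists t : tensor3, F t /\ proj1_sig t a b c))
        (tcl_closed _).

End Tensor.

Definition tensor_sup_preserving {X Y Z : supLattice} {W : supLattice}
    (p : tensor3 X Y Z -> W) : Prop :=
  forall F : tensor3 X Y Z -> Prop, p (tsup F) = sup (image p F).

(** The conjugate X^* is X itself (with x |-> x^* the identity), so
    X (x) X^* (x) X is tensor3 X X X and x1 (x) x2^* (x) x3 is ttensor x1 x2 x3. *)
Definition conj_lat (X : supLattice) : supLattice := X.

From Stdlib Require Import FunctionalExtensionality PropExtensionality ProofIrrelevance.

(* Given an imprimitivity bimodule, p (x (x) y^* (x) z) = <x, y>_A z; the bimodule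
   axioms turn into a)-c), and fullness together with essentiality makes p onto.

   Conversely, write P x y z = p (x (x) y^* (x) z). The quantale A is realised on X
   itself: its elements are the pairs (f, f') of sup-preserving endomaps of X that are
   joins of the pairs (P u v -, P v u -) standing for <u, v>. The second component
   records the action of the adjoint, so the involution is the swap and the product is
   (f g, g' f'). Condition a) says that these generators multiply like inner products,
   <u, v> <w, t> = <P u v w, t>, and commute with the maps P - v u; b) and surjectivity
   make A m-regular. B is the same construction for the reversed operation
   (x, y, z) |-> P z y x, taken with the opposite multiplication. *)

Definition sup_preserving {L M : supLattice} (f : L -> M) : Prop :=
  forall S, f (sup S) = sup (image f S).

Lemma image_image {A B C : Type} (f : B -> C) (g : A -> B) (S : A -> Prop) :
  image f (image g S) = image (fun x => f (g x)) S.
Proof.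
  extensionality u; apply propositional_extensionality; split.
  - intros [b [[a [Sa ->]] ->]]. exists a; auto.
  - intros [a [Sa ->]]. exists (g a); split; [exists a; auto | reflexivity].
Qed.

Section SupLatticeFacts.
Context {L : supLattice}.

Lemma sup_image_ext {I : Type} (f g : I -> L) (S : I -> Prop) :
  (forall i, S i -> f i = g i) -> sup (image f S) = sup (image g S).
Proof.
  intros H; f_equal; extensionality u; apply propositional_extensionality;
    split; intros [i [Si ->]]; exists i; split; auto; symmetry; auto.
Qed.

Lemma sup_preserving_mono {M : supLattice} {f : L -> M} :
  sup_preserving f -> forall x y, le x y -> le (f x) (f y).
Proof.
  intros Hf x y Hxy.
  assert (Ey : y = sup (fun z => z = x \/ z = y)).
  { apply le_antisym; [apply sup_ub; auto|].
    apply sup_least; intros z [-> | ->]; auto using le_refl. }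
  rewrite Ey, Hf. apply sup_ub. exists x; split; auto.
Qed.

Lemma sup_preserving_comp {M N : supLattice} (f : M -> N) (g : L -> M) :
  sup_preserving f -> sup_preserving g -> sup_preserving (fun x => f (g x)).
Proof. intros Hf Hg S. rewrite Hg, Hf, image_image. reflexivity. Qed.

Lemma sup_preserving_pointwise_sup {M : supLattice} {I : Type} (f : I -> L -> M)
    (F : I -> Prop) :
  (forall i, F i -> sup_preserving (f i)) ->
  sup_preserving (fun x => sup (image (fun i => f i x) F)).
Proof.
  intros Hf S. apply le_antisym; apply sup_least.
  - intros w [i [Fi ->]]. rewrite (Hf i Fi). apply sup_least. intros w [x [Sx ->]].
    eapply le_trans; [| apply sup_ub; exists x; split; [exact Sx | reflexivity]].
    apply sup_ub. exists i; auto.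
  - intros w [x [Sx ->]]. apply sup_least. intros w [i [Fi ->]].
    eapply le_trans; [| apply sup_ub; exists i; split; [exact Fi | reflexivity]].
    apply (sup_preserving_mono (Hf i Fi)), sup_ub, Sx.
Qed.

Lemma join_of_self (K : L -> Prop) a : K a -> join_of K a.
Proof.
  intros Ka. exists (fun c => c = a). split; [intros c ->; exact Ka|].
  apply le_antisym; [apply sup_ub; reflexivity | apply sup_least; intros c ->; apply le_refl].
Qed.

Lemma join_of_mono (K K' : L -> Prop) a :
  (forall c, K c -> K' c) -> join_of K a -> join_of K' a.
Proof. intros H [F [HF E]]. exists F; split; auto. Qed.

Lemma join_of_sup (K : L -> Prop) (S : L -> Prop) :
  (forall a, S a -> join_of K a) -> join_of K (sup S).
Proof.
  intros HS. exists (fun c => K c /\ exists a, S a /\ le c a). split; [tauto|].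
  apply le_antisym; apply sup_least.
  - intros a Sa. destruct (HS a Sa) as [F [HF ->]]. apply sup_least. intros c Fc.
    apply sup_ub. split; [auto|]. exists (sup F). split; [exact Sa | apply sup_ub, Fc].
  - intros c [_ [a [Sa Hca]]]. eapply le_trans; [exact Hca | apply sup_ub, Sa].
Qed.

Lemma join_of_trans {K K' : L -> Prop} {a} :
  join_of K' a -> (forall c, K' c -> join_of K c) -> join_of K a.
Proof. intros [F [HF ->]] H. apply join_of_sup. auto. Qed.

End SupLatticeFacts.

Section SubLattice.
Variables (L : supLattice) (Q : L -> Prop).
Hypothesis Q_sup : forall S : L -> Prop, (forall x, S x -> Q x) -> Q (sup S).

Lemma sub_sup_closed (S : {x | Q x} -> Prop) : Q (sup (image (@proj1_sig _ _) S)).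
Proof. apply Q_sup. intros x [[y Hy] [_ ->]]. exact Hy. Qed.

Definition sub_lattice : supLattice.
Proof.
  refine {| car := {x : L | Q x};
            le := fun a b => le (proj1_sig a) (proj1_sig b);
            sup := fun S => exist _ (sup (image (@proj1_sig _ _) S)) (sub_sup_closed S) |}.
  - intros a; apply le_refl.
  - intros a b c; apply le_trans.
  - intros [a Ha] [b Hb] H1 H2; simpl in *.
    destruct (le_antisym H1 H2). f_equal; apply proof_irrelevance.
  - intros S a Sa. apply sup_ub. exists a; auto.
  - intros S b H. apply sup_least. intros c [a [Sa ->]]. apply H, Sa.
Defined.

Lemma sub_lattice_eq (a b : sub_lattice) : proj1_sig a = proj1_sig b -> a = b.
Proof.
  destruct a as [a Ha], b as [b Hb]; simpl; intros ->. f_equal; apply proof_irrelevance.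
Qed.

End SubLattice.

Section Endpairs.
Variable X : supLattice.

Definition endpair : Type := ((X -> X) * (X -> X))%type.

Lemma endpair_ext (a b : endpair) :
  (forall z, fst a z = fst b z) -> (forall z, snd a z = snd b z) -> a = b.
Proof.
  destruct a as [a1 a2], b as [b1 b2]; simpl; intros H1 H2.
  f_equal; extensionality z; auto.
Qed.

Definition endpair_lattice : supLattice.
Proof.
  refine {| car := endpair;
            le := fun a b => forall z, le (fst a z) (fst b z) /\ le (snd a z) (snd b z);
            sup := fun S => (fun z => sup (image (fun a => fst a z) S),
                             fun z => sup (image (fun a => snd a z) S)) |}.
  - intros a z; split; apply le_refl.
  - intros a b c H1 H2 z; destruct (H1 z), (H2 z); split; eapply le_trans; eauto.
  - intros a b H1 H2. apply endpair_ext; intro z; apply le_antisym;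
      first [apply (H1 z) | apply (H2 z)].
  - intros S a Sa z; split; apply sup_ub; exists a; auto.
  - intros S b H z; split; apply sup_least; intros w [a [Sa ->]]; apply (H a Sa z).
Defined.

Definition endpair_mul (a b : endpair_lattice) : endpair_lattice :=
  (fun z => fst a (fst b z), fun z => snd b (snd a z)).

Definition endpair_swap (a : endpair_lattice) : endpair_lattice := (snd a, fst a).

Lemma fst_at_sup_preserving x : sup_preserving (fun a : endpair_lattice => fst a x).
Proof. intros S; reflexivity. Qed.

Lemma snd_at_sup_preserving x : sup_preserving (fun a : endpair_lattice => snd a x).
Proof. intros S; reflexivity. Qed.

Lemma endpair_mul_sup_l (S : endpair_lattice -> Prop) (b : endpair_lattice) :
  sup_preserving (snd b) ->
  endpair_mul (sup S) b = sup (image (fun a => endpair_mul a b) S).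
Proof.
  intros Hb. apply endpair_ext; intro z; simpl; [| rewrite (Hb _)];
    rewrite !image_image; reflexivity.
Qed.

Lemma endpair_mul_sup_r (a : endpair_lattice) (S : endpair_lattice -> Prop) :
  sup_preserving (fst a) ->
  endpair_mul a (sup S) = sup (image (endpair_mul a) S).
Proof.
  intros Ha. apply endpair_ext; intro z; simpl; [rewrite (Ha _) |];
    rewrite !image_image; reflexivity.
Qed.

Lemma endpair_swap_sup (S : endpair_lattice -> Prop) :
  endpair_swap (sup S) = sup (image endpair_swap S).
Proof. apply endpair_ext; intro z; simpl; rewrite image_image; reflexivity. Qed.

End Endpairs.

Arguments endpair_mul {X} a b.
Arguments endpair_swap {X} a.

Section QuantaleModules.
Context {Q : quantale}.

Lemma qmul_left_module : is_left_module (@qmul Q).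
Proof.
  split; [|split]; [apply qmul_assoc | intros S x; apply qmul_supl | apply qmul_supr].
Qed.

Lemma qmul_right_module : is_right_module (@qmul Q).
Proof.
  split; [|split];
    [intros; symmetry; apply qmul_assoc | intros S x; apply qmul_supl | apply qmul_supr].
Qed.

Lemma m_regular_quantale_intro :
  left_essential (@qmul Q) -> left_separated (@qmul Q) ->
  right_essential (@qmul Q) -> right_separated (@qmul Q) -> m_regular_quantale Q.
Proof.
  intros. split; [|split]; [split; [|split] | split; [|split] |]; auto.
  - exact qmul_left_module.
  - exact qmul_right_module.
  - intros; apply qmul_assoc.
Qed.

End QuantaleModules.

Definition op_quantale (Q : quantale) : quantale.
Proof.
  refine (@Quantale (qlat Q) (fun a b => qmul b a) _ _ _).
  - intros a b c. symmetry. apply qmul_assoc.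
  - intros a S. apply qmul_supl.
  - intros a S. apply qmul_supr.
Defined.

Definition op_invquantale (Q : invQuantale) : invQuantale.
Proof.
  refine (@InvQuantale (op_quantale Q) (@qinv Q) _ _ _).
  - apply qinv_inv.
  - apply qinv_sup.
  - intros a b. apply qinv_mul.
Defined.

Lemma m_regular_right_op {Q : quantale} {X : supLattice} (act : Q -> X -> X) :
  m_regular_left act -> @m_regular_right (op_quantale Q) X (fun x a => act a x).
Proof.
  intros [[M1 [M2 M3]] [E S]]. split; [split; [|split] | split].
  - intros x a b. apply M1.
  - intros T b. apply M3.
  - intros x T. apply M2.
  - intros x. eapply join_of_mono; [|apply (E x)].
    intros y [a [m ->]]. exists m, a; reflexivity.
  - exact S.
Qed.

Lemma m_regular_left_op {Q : quantale} {X : supLattice} (act : X -> Q -> X) :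
  m_regular_right act -> @m_regular_left (op_quantale Q) X (fun a x => act x a).
Proof.
  intros [[M1 [M2 M3]] [E S]]. split; [split; [|split] | split].
  - intros a b x. apply M1.
  - intros T x. apply M3.
  - intros a T. apply M2.
  - intros x. eapply join_of_mono; [|apply (E x)].
    intros y [m [b ->]]. exists b, m; reflexivity.
  - exact S.
Qed.

Lemma m_regular_quantale_op (Q : quantale) :
  m_regular_quantale Q -> m_regular_quantale (op_quantale Q).
Proof.
  intros [L [R C]]. split; [|split].
  - exact (m_regular_left_op _ R).
  - exact (m_regular_right_op _ L).
  - intros a x b. exact (eq_sym (C b x a)).
Qed.

Section TensorFacts.
Context {X Y Z : supLattice}.

Lemma tcl_incl (R : X -> Y -> Z -> Prop) a b c : R a b c -> tcl R a b c.
Proof. intros H T _ HR; apply HR, H. Qed.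

Lemma tcl_ind (R T : X -> Y -> Z -> Prop) :
  tclosed T -> (forall a b c, R a b c -> T a b c) -> forall a b c, tcl R a b c -> T a b c.
Proof. intros HT HR a b c H; apply H; auto. Qed.

Lemma tensor3_ext (s t : tensor3 X Y Z) :
  (forall a b c, proj1_sig s a b c <-> proj1_sig t a b c) -> s = t.
Proof.
  destruct s as [s Hs], t as [t Ht]; simpl; intros H.
  assert (s = t) as <- by (extensionality a; extensionality b; extensionality c;
                            apply propositional_extensionality, H).
  f_equal; apply proof_irrelevance.
Qed.

Lemma ttensor_le (x a : X) (y b : Y) (z c : Z) :
  le a x -> le b y -> le c z -> proj1_sig (ttensor x y z) a b c.
Proof. intros ha hb hc. apply (proj1 (tcl_closed _) x y z); auto. apply tcl_incl; auto. Qed.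

Lemma ttensor_eq_tsup (x : X) (y : Y) (z : Z) (F : tensor3 X Y Z -> Prop) :
  (forall s, F s -> exists a b c, s = ttensor a b c /\ le a x /\ le b y /\ le c z) ->
  proj1_sig (tsup F) x y z -> ttensor x y z = tsup F.
Proof.
  intros HF Hxyz. apply tensor3_ext; intros a b c; split; simpl.
  - apply tcl_ind; [apply tcl_closed|]. intros ? ? ? [-> [-> ->]]. exact Hxyz.
  - apply tcl_ind; [apply tcl_closed|]. intros a' b' c' [s [Fs Hs]].
    destruct (HF s Fs) as [a'' [b'' [c'' [-> [ha [hb hc]]]]]]. revert a' b' c' Hs.
    apply tcl_ind; [apply tcl_closed|]. intros ? ? ? [-> [-> ->]]. apply ttensor_le; auto.
Qed.

Lemma ttensor_sup_l (S : X -> Prop) (y : Y) (z : Z) :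
  ttensor (sup S) y z = tsup (image (fun x => ttensor x y z) S).
Proof.
  apply ttensor_eq_tsup.
  - intros s [x [Sx ->]]. exists x, y, z. auto using sup_ub, le_refl.
  - apply (proj1 (proj2 (tcl_closed _))). intros x Sx. apply tcl_incl.
    exists (ttensor x y z). split; [exists x; auto | apply ttensor_le; apply le_refl].
Qed.

Lemma ttensor_sup_m (x : X) (S : Y -> Prop) (z : Z) :
  ttensor x (sup S) z = tsup (image (fun y => ttensor x y z) S).
Proof.
  apply ttensor_eq_tsup.
  - intros s [y [Sy ->]]. exists x, y, z. auto using sup_ub, le_refl.
  - apply (proj1 (proj2 (proj2 (tcl_closed _)))). intros y Sy. apply tcl_incl.
    exists (ttensor x y z). split; [exists y; auto | apply ttensor_le; apply le_refl].
Qed.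

Lemma ttensor_sup_r (x : X) (y : Y) (S : Z -> Prop) :
  ttensor x y (sup S) = tsup (image (fun z => ttensor x y z) S).
Proof.
  apply ttensor_eq_tsup.
  - intros s [z [Sz ->]]. exists x, y, z. auto using sup_ub, le_refl.
  - apply (proj2 (proj2 (proj2 (tcl_closed _)))). intros z Sz. apply tcl_incl.
    exists (ttensor x y z). split; [exists z; auto | apply ttensor_le; apply le_refl].
Qed.

Lemma tensor3_decomp (t : tensor3 X Y Z) :
  t = tsup (fun s => exists a b c, proj1_sig t a b c /\ s = ttensor a b c).
Proof.
  apply tensor3_ext; intros a b c; split; simpl.
  - intros H. apply tcl_incl. exists (ttensor a b c).
    split; [exists a, b, c; auto | apply ttensor_le; apply le_refl].
  - apply tcl_ind; [apply (proj2_sig t)|]. intros ? ? ? [s [[a' [b' [c' [H ->]]]] Hs]].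
    revert Hs. apply tcl_ind; [apply (proj2_sig t)|]. intros ? ? ? [-> [-> ->]]; exact H.
Qed.

End TensorFacts.

Section TensorLift.
Context {X Y Z W : supLattice} (f : X -> Y -> Z -> W).
Hypothesis f_sup_l : forall S b c, f (sup S) b c = sup (image (fun a => f a b c) S).
Hypothesis f_sup_m : forall a S c, f a (sup S) c = sup (image (fun b => f a b c) S).
Hypothesis f_sup_r : forall a b S, f a b (sup S) = sup (image (fun c => f a b c) S).

Definition tensor_lift (t : tensor3 X Y Z) : W :=
  sup (fun w => exists a b c, proj1_sig t a b c /\ w = f a b c).

Lemma trilinear_mono x y z x' y' z' :
  le x' x -> le y' y -> le z' z -> le (f x' y' z') (f x y z).
Proof.
  intros hx hy hz.
  eapply le_trans; [apply (@sup_preserving_mono _ _ (fun a => f a y' z')); [|exact hx]|].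
  { intros S; apply f_sup_l. }
  eapply le_trans; [apply (@sup_preserving_mono _ _ (fun b => f x b z')); [|exact hy]|].
  { intros S; apply f_sup_m. }
  apply (@sup_preserving_mono _ _ (f x y)); [|exact hz].
  intros S; apply f_sup_r.
Qed.

Lemma tclosed_below (M : W) : tclosed (fun a b c => le (f a b c) M).
Proof.
  split; [|split; [|split]].
  - intros x y z x' y' z' H hx hy hz. eapply le_trans; [apply trilinear_mono; eauto | exact H].
  - intros F y z H. rewrite f_sup_l. apply sup_least. intros w [a [Fa ->]]; auto.
  - intros x F z H. rewrite f_sup_m. apply sup_least. intros w [b [Fb ->]]; auto.
  - intros x y F H. rewrite f_sup_r. apply sup_least. intros w [c [Fc ->]]; auto.
Qed.

Lemma tensor_lift_pure x y z : tensor_lift (ttensor x y z) = f x y z.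
Proof.
  apply le_antisym.
  - apply sup_least. intros w [a [b [c [H ->]]]]. revert a b c H.
    apply tcl_ind; [apply tclosed_below|]. intros a b c [-> [-> ->]]; apply le_refl.
  - apply sup_ub. exists x, y, z. split; [apply tcl_incl; auto | reflexivity].
Qed.

Lemma tensor_lift_sup_preserving : tensor_sup_preserving tensor_lift.
Proof.
  intros F. apply le_antisym; apply sup_least.
  - intros w [a [b [c [H ->]]]]. revert a b c H.
    apply tcl_ind; [apply tclosed_below|]. intros a b c [t [Ft Ht]].
    eapply le_trans; [| apply sup_ub; exists t; split; [exact Ft | reflexivity]].
    apply sup_ub; exists a, b, c; auto.
  - intros w [t [Ft ->]]. apply sup_least. intros w [a [b [c [H ->]]]].
    apply sup_ub. exists a, b, c. split; [apply tcl_incl; exists t; auto | reflexivity].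
Qed.

End TensorLift.

(* The conditions of the theorem on P x y z = p (x (x) y^* (x) z), with the
   surjectivity of p weakened to [tern_ess]. *)
Set Implicit Arguments.
Record regular_ternary (X : supLattice) (P : X -> X -> X -> X) : Prop := {
  tern_sup_l : forall S y z, P (sup S) y z = sup (image (fun x => P x y z) S);
  tern_sup_m : forall x S z, P x (sup S) z = sup (image (fun y => P x y z) S);
  tern_sup_r : forall x y S, P x y (sup S) = sup (image (P x y) S);
  tern_assoc_l : forall x1 x2 x3 x4 x5, P (P x1 x2 x3) x4 x5 = P x1 x2 (P x3 x4 x5);
  tern_assoc_m : forall x1 x2 x3 x4 x5, P x1 (P x4 x3 x2) x5 = P x1 x2 (P x3 x4 x5);
  tern_sep_l : forall x1 x2, (forall u v, P u v x1 = P u v x2) -> x1 = x2;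
  tern_sep_r : forall x1 x2, (forall u v, P x1 v u = P x2 v u) -> x1 = x2;
  tern_ess : forall x, join_of (fun y => exists u v w, y = P u v w) x
}.
Unset Implicit Arguments.
Arguments regular_ternary {X} P.

Definition ternary_rev {X : supLattice} (P : X -> X -> X -> X) : X -> X -> X -> X :=
  fun u v w => P w v u.

Lemma regular_ternary_rev {X : supLattice} {P : X -> X -> X -> X} :
  regular_ternary P -> regular_ternary (ternary_rev P).
Proof.
  intros HP; unfold ternary_rev; split.
  - intros S y z. apply (tern_sup_r HP).
  - intros x S z. apply (tern_sup_m HP).
  - intros x y S. apply (tern_sup_l HP).
  - intros. symmetry. apply (tern_assoc_l HP).
  - intros. rewrite (tern_assoc_m HP). symmetry. apply (tern_assoc_l HP).
  - apply (tern_sep_r HP).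
  - apply (tern_sep_l HP).
  - intros x. eapply join_of_mono; [|apply (tern_ess HP x)].
    intros y [u [v [w ->]]]. exists w, v, u. reflexivity.
Qed.

Section RegularTernary.
Context {X : supLattice} {P : X -> X -> X -> X}.
Hypothesis HP : regular_ternary P.

Lemma tern_sup_preserving_l y z : sup_preserving (fun x => P x y z).
Proof. intros S; apply (tern_sup_l HP). Qed.

Lemma tern_sup_preserving_m x z : sup_preserving (fun y => P x y z).
Proof. intros S; apply (tern_sup_m HP). Qed.

Lemma tern_sup_preserving_r x y : sup_preserving (P x y).
Proof. intros S; apply (tern_sup_r HP). Qed.

Lemma tern_values_ext (f g : X -> X) :
  sup_preserving f -> sup_preserving g ->
  (forall u v w, f (P u v w) = g (P u v w)) -> forall x, f x = g x.
Proof.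
  intros Hf Hg H x. destruct (tern_ess HP x) as [F [HF ->]].
  rewrite (Hf _), (Hg _). apply sup_image_ext. intros y Fy.
  destruct (HF y Fy) as [u [v [w ->]]]. apply H.
Qed.

End RegularTernary.

Section GeneratedQuantale.
Context {X : supLattice} (P : X -> X -> X -> X).
Hypothesis HP : regular_ternary P.

Definition gen (u v : X) : endpair_lattice X := (P u v, P v u).

Definition is_gen (g : endpair_lattice X) : Prop := exists u v, g = gen u v.

Definition generated : endpair_lattice X -> Prop := join_of is_gen.

Lemma generated_gen u v : generated (gen u v).
Proof. apply join_of_self. exists u, v; reflexivity. Qed.

Lemma generated_sup (S : endpair_lattice X -> Prop) :
  (forall a, S a -> generated a) -> generated (sup S).
Proof. apply join_of_sup. Qed.

Lemma generated_sup_preserving {a} :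
  generated a -> sup_preserving (fst a) /\ sup_preserving (snd a).
Proof.
  intros [F [HF ->]]. split; apply sup_preserving_pointwise_sup;
    intros g Fg; destruct (HF g Fg) as [u [v ->]]; apply (tern_sup_preserving_r HP).
Qed.

Lemma mul_gen u v w t : endpair_mul (gen u v) (gen w t) = gen (P u v w) t.
Proof.
  apply endpair_ext; intro z; simpl; symmetry;
    [apply (tern_assoc_l HP) | apply (tern_assoc_m HP)].
Qed.

Lemma generated_mul {a b} : generated a -> generated b -> generated (endpair_mul a b).
Proof.
  intros Ha Hb. destruct (generated_sup_preserving Hb) as [_ Hb2].
  destruct Ha as [F [HF ->]]. rewrite endpair_mul_sup_l by exact Hb2.
  apply generated_sup. intros c [g [Fg ->]]. destruct (HF g Fg) as [u [v ->]].
  destruct Hb as [G [HG ->]]. rewrite endpair_mul_sup_r by apply (tern_sup_preserving_r HP).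
  apply generated_sup. intros c [g [Gg ->]]. destruct (HG g Gg) as [w [t ->]].
  rewrite mul_gen. apply generated_gen.
Qed.

Lemma generated_swap {a} : generated a -> generated (endpair_swap a).
Proof.
  intros [F [HF ->]]. rewrite endpair_swap_sup. apply generated_sup.
  intros c [g [Fg ->]]. destruct (HF g Fg) as [u [v ->]]. apply (generated_gen v u).
Qed.

Lemma generated_ext {Y : supLattice} (h1 h2 : endpair_lattice X -> Y) :
  sup_preserving h1 -> sup_preserving h2 ->
  (forall u v, h1 (gen u v) = h2 (gen u v)) -> forall a, generated a -> h1 a = h2 a.
Proof.
  intros H1 H2 Hg a [F [HF ->]]. rewrite (H1 _), (H2 _). apply sup_image_ext.
  intros g Fg. destruct (HF g Fg) as [u [v ->]]. apply Hg.
Qed.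

Lemma generated_cancel_l a a' : generated a -> generated a' ->
  (forall u v, endpair_mul (gen u v) a = endpair_mul (gen u v) a') -> a = a'.
Proof.
  intros Ha Ha' H. apply endpair_ext; intro z.
  - apply (tern_sep_l HP). intros u v. exact (f_equal (fun c => fst c z) (H u v)).
  - apply (tern_values_ext HP); [apply generated_sup_preserving..|]; auto.
    intros u v w. exact (f_equal (fun c => snd c w) (H v u)).
Qed.

Lemma generated_cancel_r a a' : generated a -> generated a' ->
  (forall u v, endpair_mul a (gen u v) = endpair_mul a' (gen u v)) -> a = a'.
Proof.
  intros Ha Ha' H. apply endpair_ext; intro z.
  - apply (tern_values_ext HP); [apply generated_sup_preserving..|]; auto.
    intros u v w. exact (f_equal (fun c => fst c w) (H u v)).
  - apply (tern_sep_l HP). intros u v. exact (f_equal (fun c => snd c z) (H v u)).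
Qed.


Definition gq_lattice : supLattice := sub_lattice _ _ generated_sup.

Lemma gq_sup_val (S : gq_lattice -> Prop) :
  proj1_sig (sup S) = sup (image (@proj1_sig _ _) S).
Proof. reflexivity. Qed.

Definition gq_mul (a b : gq_lattice) : gq_lattice :=
  exist _ (endpair_mul (proj1_sig a) (proj1_sig b))
          (generated_mul (proj2_sig a) (proj2_sig b)).

Definition gq_quantale : quantale.
Proof.
  refine (@Quantale gq_lattice gq_mul _ _ _).
  - intros a b c. apply sub_lattice_eq. reflexivity.
  - intros a S. apply sub_lattice_eq. cbn [gq_mul proj1_sig].
    rewrite !gq_sup_val, endpair_mul_sup_r by apply (generated_sup_preserving (proj2_sig a)).
    rewrite !image_image. reflexivity.
  - intros a S. apply sub_lattice_eq. cbn [gq_mul proj1_sig].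
    rewrite !gq_sup_val, endpair_mul_sup_l by apply (generated_sup_preserving (proj2_sig a)).
    rewrite !image_image. reflexivity.
Defined.

Definition gq_swap (a : gq_quantale) : gq_quantale :=
  exist _ (endpair_swap (proj1_sig a)) (generated_swap (proj2_sig a)).

Definition gq : invQuantale.
Proof.
  refine (@InvQuantale gq_quantale gq_swap _ _ _).
  - intros a. apply sub_lattice_eq. apply endpair_ext; reflexivity.
  - intros S. apply sub_lattice_eq. cbn [gq_swap proj1_sig].
    rewrite !gq_sup_val, endpair_swap_sup, !image_image. reflexivity.
  - intros a b. apply sub_lattice_eq. reflexivity.
Defined.

Definition gq_act (a : gq) (x : X) : X := fst (proj1_sig a) x.

Definition gq_ip (x y : X) : gq := exist _ (gen x y) (generated_gen x y).

Lemma gq_ip_sup_l (S : X -> Prop) y : gq_ip (sup S) y = sup (image (fun x => gq_ip x y) S).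
Proof.
  apply sub_lattice_eq. simpl. apply endpair_ext; intro z; simpl; rewrite !image_image;
    [apply (tern_sup_l HP) | apply (tern_sup_m HP)].
Qed.

Lemma gq_ip_sup_r x (S : X -> Prop) : gq_ip x (sup S) = sup (image (gq_ip x) S).
Proof.
  apply sub_lattice_eq. simpl. apply endpair_ext; intro z; simpl; rewrite !image_image;
    [apply (tern_sup_m HP) | apply (tern_sup_l HP)].
Qed.

Lemma gq_ip_mul u v w t : gq_ip (P u v w) t = qmul (gq_ip u v) (gq_ip w t).
Proof. apply sub_lattice_eq. symmetry. apply mul_gen. Qed.

Lemma gq_ip_full (a : gq) : join_of (fun c => exists x y, c = gq_ip x y) a.
Proof.
  destruct a as [a [F [HF ->]]].
  exists (fun c => F (proj1_sig c)). split.
  - intros [c Hc] Fc. destruct (HF c Fc) as [u [v ->]]. exists u, v.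
    apply sub_lattice_eq; reflexivity.
  - apply sub_lattice_eq. rewrite gq_sup_val. cbn [proj1_sig]. f_equal.
    extensionality g; apply propositional_extensionality; split.
    + intros Fg. exists (exist _ g (join_of_self _ _ (HF g Fg))). auto.
    + intros [[c Hc] [Fc ->]]. exact Fc.
Qed.

Lemma gq_join_of_products (a : gq) : join_of (fun c => exists b d, c = qmul b d) a.
Proof.
  apply (join_of_trans (gq_ip_full a)). intros c [u [v ->]].
  destruct (tern_ess HP u) as [F [HF ->]]. rewrite gq_ip_sup_l.
  apply join_of_sup. intros c [x [Fx ->]]. destruct (HF x Fx) as [u [v' [w ->]]].
  apply join_of_self. exists (gq_ip u v'), (gq_ip w v). apply gq_ip_mul.
Qed.

Lemma gq_m_regular : m_regular_quantale gq.
Proof.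
  apply m_regular_quantale_intro.
  - exact gq_join_of_products.
  - intros a a' H. apply sub_lattice_eq.
    apply generated_cancel_l; [exact (proj2_sig a) | exact (proj2_sig a') |].
    intros u v. exact (f_equal (@proj1_sig _ _) (H (gq_ip u v))).
  - exact gq_join_of_products.
  - intros a a' H. apply sub_lattice_eq.
    apply generated_cancel_r; [exact (proj2_sig a) | exact (proj2_sig a') |].
    intros u v. exact (f_equal (@proj1_sig _ _) (H (gq_ip u v))).
Qed.

Lemma gq_act_m_regular : m_regular_left gq_act.
Proof.
  split; [split; [|split] | split].
  - reflexivity.
  - intros S x. unfold gq_act. simpl. rewrite image_image. reflexivity.
  - intros a S. apply (generated_sup_preserving (proj2_sig a)).
  - intros x. eapply join_of_mono; [|apply (tern_ess HP x)].
    intros y [u [v [w ->]]]. exists (gq_ip u v), w. reflexivity.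
  - intros x y H. apply (tern_sep_l HP). intros u v. exact (H (gq_ip u v)).
Qed.

Lemma gq_ip_act (a : gq) x y : gq_ip (gq_act a x) y = qmul a (gq_ip x y).
Proof.
  destruct a as [a Ha]. apply sub_lattice_eq. unfold gq_act. simpl.
  apply endpair_ext; intro z; simpl.
  - refine (generated_ext (fun a => P (fst a x) y z) (fun a => fst a (P x y z)) _ _ _ a Ha).
    + apply (sup_preserving_comp (fun w => P w y z) (fun a : endpair_lattice X => fst a x));
        [apply (tern_sup_preserving_l HP) | apply fst_at_sup_preserving].
    + apply fst_at_sup_preserving.
    + intros u v. apply (tern_assoc_l HP).
  - refine (generated_ext (fun a => P y (fst a x) z) (fun a => P y x (snd a z)) _ _ _ a Ha).
    + apply (sup_preserving_comp (fun w => P y w z) (fun a : endpair_lattice X => fst a x));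
        [apply (tern_sup_preserving_m HP) | apply fst_at_sup_preserving].
    + apply (sup_preserving_comp (P y x) (fun a : endpair_lattice X => snd a z));
        [apply (tern_sup_preserving_r HP) | apply snd_at_sup_preserving].
    + intros u v. apply (tern_assoc_m HP).
Qed.

End GeneratedQuantale.

Section TwoSidedAction.
Context {X : supLattice} (P : X -> X -> X -> X) (HP : regular_ternary P).
Let HPrev := regular_ternary_rev HP.

Lemma gen_commute_rev_act u v (b : gq _ HPrev) x :
  P u v (gq_act _ HPrev b x) = gq_act _ HPrev b (P u v x).
Proof.
  destruct b as [b Hb]. unfold gq_act; simpl.
  refine (generated_ext _ (fun b => P u v (fst b x)) (fun b => fst b (P u v x)) _ _ _ b Hb).
  - apply (sup_preserving_comp (P u v) (fun b : endpair_lattice X => fst b x));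
      [apply (tern_sup_preserving_r HP) | apply fst_at_sup_preserving].
  - apply fst_at_sup_preserving.
  - intros u' v'. symmetry. apply (tern_assoc_l HP).
Qed.

Lemma gq_act_commute_rev (a : gq P HP) (b : gq _ HPrev) x :
  gq_act P HP a (gq_act _ HPrev b x) = gq_act _ HPrev b (gq_act P HP a x).
Proof.
  destruct a as [a Ha]. unfold gq_act at 1 3; simpl.
  refine (generated_ext P (fun a => fst a (gq_act _ HPrev b x))
                          (fun a => gq_act _ HPrev b (fst a x)) _ _ _ a Ha).
  - apply fst_at_sup_preserving.
  - apply (sup_preserving_comp (gq_act _ HPrev b) (fun a : endpair_lattice X => fst a x));
      [apply (generated_sup_preserving _ HPrev (proj2_sig b)) | apply fst_at_sup_preserving].
  - intros u v. apply gen_commute_rev_act.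
Qed.

End TwoSidedAction.

Definition admits_imprimitivity (X : supLattice) : Prop :=
  exists (A B : invQuantale)
         (lact : A -> X -> X) (ract : X -> B -> X)
         (lip : X -> X -> A) (rip : X -> X -> B),
    m_regular_quantale A /\ m_regular_quantale B /\
    is_imprimitivity lact ract lip rip.

Lemma imprimitivity_of_regular_ternary {X : supLattice} {P : X -> X -> X -> X} :
  regular_ternary P -> admits_imprimitivity X.
Proof.
  intros HP. pose proof (regular_ternary_rev HP) as HP'.
  exists (gq P HP), (op_invquantale (gq _ HP')), (gq_act P HP), (fun x b => gq_act _ HP' b x),
    (gq_ip P HP), (fun x y => gq_ip _ HP' y x).
  split; [apply gq_m_regular|]. split; [apply m_regular_quantale_op, gq_m_regular|].
  split; [split; [|split]|].
  { apply gq_act_m_regular. }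
  { apply m_regular_right_op, gq_act_m_regular. }
  { intros a x b. symmetry. apply gq_act_commute_rev. }
  split; [intros S y; apply gq_ip_sup_l|].
  split; [intros x S; apply gq_ip_sup_r|].
  split; [intros S y; apply gq_ip_sup_r|].
  split; [intros x S; apply gq_ip_sup_l|].
  split; [intros a x y; apply gq_ip_act|].
  split; [intros x y; apply sub_lattice_eq; reflexivity|].
  split; [intros x y b; apply gq_ip_act|].
  split; [intros x y; apply sub_lattice_eq; reflexivity|].
  split; [apply gq_ip_full|].
  split; [|reflexivity].
  intros b. eapply join_of_mono; [|apply (gq_ip_full _ HP' b)].
  intros c [x [y ->]]. exists y, x. reflexivity.
Qed.

Lemma regular_ternary_of_imprimitivity {A B : invQuantale} {X : supLattice}
    {lact : A -> X -> X} {ract : X -> B -> X} {lip : X -> X -> A} {rip : X -> X -> B} :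
  is_imprimitivity lact ract lip rip -> regular_ternary (fun x y z => lact (lip x y) z).
Proof.
  intros [[[[LM1 [LM2 LM3]] [LE LS]] [[[_ [_ RM3]] [_ RS]] _]]
          [L1 [L2 [_ [_ [LL [LI [_ [_ [LF [RF Mid]]]]]]]]]]].
  split.
  - intros S y z. rewrite L1, LM2, image_image. reflexivity.
  - intros x S z. rewrite L2, LM2, image_image. reflexivity.
  - intros x y S. apply LM3.
  - intros x1 x2 x3 x4 x5. rewrite LL, LM1. reflexivity.
  - intros x1 x2 x3 x4 x5.
    rewrite <- (LI (lact (lip x4 x3) x2) x1), LL, qinv_mul, !LI, LM1. reflexivity.
  - intros x1 x2 H. apply LS. intros a. destruct (LF a) as [G [HG ->]].
    rewrite !LM2. apply sup_image_ext. intros c Gc. destruct (HG c Gc) as [u [v ->]]. apply H.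
  - intros x1 x2 H. apply RS. intros b. destruct (RF b) as [G [HG ->]].
    rewrite !RM3. apply sup_image_ext. intros c Gc. destruct (HG c Gc) as [v [u ->]].
    rewrite <- !Mid. apply H.
  - intros x. apply (join_of_trans (LE x)). intros c [a [m ->]].
    destruct (LF a) as [G [HG ->]]. rewrite LM2. apply join_of_sup.
    intros c [d [Gd ->]]. destruct (HG d Gd) as [u [v ->]].
    apply join_of_self. exists u, v, m. reflexivity.
Qed.

Definition ternary_tensor_map (X : supLattice) (p : tensor3 X (conj_lat X) X -> X) : Prop :=
  tensor_sup_preserving p /\
  (forall x : X, exists t, p t = x) /\
  (forall x1 x2 x3 x4 x5 : X,
     p (ttensor (p (ttensor x1 x2 x3)) x4 x5)
       = p (ttensor x1 (p (ttensor x4 x3 x2)) x5) /\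
     p (ttensor x1 (p (ttensor x4 x3 x2)) x5)
       = p (ttensor x1 x2 (p (ttensor x3 x4 x5)))) /\
  (forall x1 x2 : X,
     (forall u v : X, p (ttensor u v x1) = p (ttensor u v x2)) -> x1 = x2) /\
  (forall x1 x2 : X,
     (forall u v : X, p (ttensor x1 v u) = p (ttensor x2 v u)) -> x1 = x2).

Lemma ternary_tensor_map_of_regular {X : supLattice} {P : X -> X -> X -> X} :
  regular_ternary P -> exists p, ternary_tensor_map X p.
Proof.
  intros HP.
  pose proof (tensor_lift_pure P (tern_sup_l HP) (tern_sup_m HP) (tern_sup_r HP)) as Hpure.
  exists (tensor_lift P). split; [|split; [|split; [|split]]].
  - apply tensor_lift_sup_preserving; apply HP.
  - intros x. destruct (tern_ess HP x) as [F [HF ->]].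
    exists (tsup (fun s => exists u v w, F (P u v w) /\ s = ttensor u v w)).
    rewrite tensor_lift_sup_preserving by apply HP. apply le_antisym; apply sup_least.
    + intros y [s [[u [v [w [Fy ->]]]] ->]]. rewrite Hpure. apply sup_ub, Fy.
    + intros y Fy. destruct (HF y Fy) as [u [v [w ->]]]. apply sup_ub.
      exists (ttensor u v w). split; [exists u, v, w; auto | symmetry; apply Hpure].
  - intros x1 x2 x3 x4 x5. rewrite !Hpure, (tern_assoc_m HP).
    split; [apply (tern_assoc_l HP) | reflexivity].
  - intros x1 x2 H. apply (tern_sep_l HP). intros u v. rewrite <- !Hpure. apply H.
  - intros x1 x2 H. apply (tern_sep_r HP). intros u v. rewrite <- !Hpure. apply H.
Qed.

Lemma regular_ternary_of_tensor_map {X : supLattice} {p : tensor3 X (conj_lat X) X -> X} :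
  ternary_tensor_map X p -> regular_ternary (fun x y z => p (ttensor x y z)).
Proof.
  intros [Hsup [Hsurj [Hassoc [Hsep_l Hsep_r]]]]. split.
  - intros S y z. rewrite ttensor_sup_l, Hsup, image_image. reflexivity.
  - intros x S z. rewrite ttensor_sup_m, Hsup, image_image. reflexivity.
  - intros x y S. rewrite ttensor_sup_r, Hsup, image_image. reflexivity.
  - intros x1 x2 x3 x4 x5. destruct (Hassoc x1 x2 x3 x4 x5) as [E1 E2]. rewrite E1; exact E2.
  - intros x1 x2 x3 x4 x5. apply Hassoc.
  - exact Hsep_l.
  - exact Hsep_r.
  - intros x. destruct (Hsurj x) as [t <-]. rewrite (tensor3_decomp t), Hsup.
    eexists. split; [|reflexivity].
    intros y [s [[a [b [c [_ ->]]]] ->]]. exists a, b, c. reflexivity.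
Qed.

Theorem theorem2 (X : supLattice) :
  (exists (A B : invQuantale)
          (lact : A -> X -> X) (ract : X -> B -> X)
          (lip : X -> X -> A) (rip : X -> X -> B),
      m_regular_quantale A /\ m_regular_quantale B /\
      is_imprimitivity lact ract lip rip)
  <->
  (exists p : tensor3 X (conj_lat X) X -> X,
      tensor_sup_preserving p /\
      (forall x : X, exists t, p t = x) /\
      (forall x1 x2 x3 x4 x5 : X,
         p (ttensor (p (ttensor x1 x2 x3)) x4 x5)
           = p (ttensor x1 (p (ttensor x4 x3 x2)) x5) /\
         p (ttensor x1 (p (ttensor x4 x3 x2)) x5)
           = p (ttensor x1 x2 (p (ttensor x3 x4 x5)))) /\
      (forall x1 x2 : X,
         (forall u v : X, p (ttensor u v x1) = p (ttensor u v x2)) -> x1 = x2) /\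
      (forall x1 x2 : X,
         (forall u v : X, p (ttensor x1 v u) = p (ttensor x2 v u)) -> x1 = x2)).
Proof.
  split.
  - intros (A & B & lact & ract & lip & rip & _ & _ & Himp).
    exact (ternary_tensor_map_of_regular (regular_ternary_of_imprimitivity Himp)).
  - intros [p Hp]. exact (imprimitivity_of_regular_ternary (regular_ternary_of_tensor_map Hp)).
Qed.
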